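(* Let $\Omega$ be a program with weight constraints, $Z$ a consistent set of literals, and $\Pi_1$ the program consisting of the rules $l\leftarrow\mathit{not}\,\mathit{not}\,l,[C_1],\dots,[C_n]$ for every rule $C_0\leftarrow C_1,\dots,C_n$ of $\Omega$ and every positive head element $l$ of that rule. If $\mathit{cl}(\Omega^Z)$ is consistent then it is the only answer set of the program $\Pi_1^Z$; otherwise $\Pi_1^Z$ has no answer sets.
   Context: A literal is an atom $a$ or $\neg a$; a set of literals is consistent if it contains no pair $a,\neg a$. Formulas are built from literals, $\bot$, $\top$ using $\mathit{not}$, '','' (conjunction), '';'' (disjunction). For a set $Z$ of literals: $Z\models l$ iff $l\in Z$; $Z\models\top$; $Z\not\models\bot$; $Z\models(F,G)$ iff both; $Z\models(F;G)$ iff at least one; $Z\models\mathit{not}\,F$ iff $Z\not\models F$; $Z$ satisfies a set of rules $\mathit{Head}\leftarrow\mathit{Body}$ if $Z\models\mathit{Body}$ implies $Z\models\mathit{Head}$ for each. Reduct: $F^Z=F$ for $F$ a literal, $\bot$, $\top$; $(F,G)^Z=F^Z,G^Z$; $(F;G)^Z=F^Z;G^Z$; $(\mathit{not}\,F)^Z=\bot$ if $Z\models F$, else $\top$; $\Pi^Z$ applies this to heads and bodies. A consistent set is an answer set of a $\mathit{not}$-free program if it is a minimal consistent set of literals satisfying it. $\langle F_1,\dots,F_n\rangle:X$ is the disjunction over $I\in X$ of the conjunctions of $F_i$, $i\in I$ (empty conjunction $\top$, empty disjunction $\bot$). A rule element is a literal $l$ (positive) or $\mathit{not}\,l$ (negative).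 A weight constraint is $L\le\{c_1=w_1,\dots,c_m=w_m\}\le U$ ($L,U$ reals or $\pm\infty$, $w_i\ge0$); $Z$ satisfies it if $L\le\sum_{j:Z\models c_j}w_j\le U$. A program with weight constraints is a set of rules $C_0\leftarrow C_1,\dots,C_n$; the rule elements of $C_0$ are the head elements. $(L\le S)^Z=L^Z\le S'$, where $S'$ drops the pairs with negative elements and $L^Z$ is $L$ minus the sum of weights of pairs $c=w$ with $c$ negative and $Z\models c$. The reduct of $L_0\le S_0\le U_0\leftarrow L_1\le S_1\le U_1,\dots,L_n\le S_n\le U_n$ is, if $Z$ satisfies $S_i\le U_i$ for all $1\le i\le n$, the set of rules $l\leftarrow(L_1\le S_1)^Z,\dots,(L_n\le S_n)^Z$ for all positive head elements $l$ with $l\in Z$; otherwise empty. $\Omega^Z$ is the union of the reducts of its rules; a set of literals satisfies $\Omega^Z$ if for each rule whose body constraints it satisfies it contains the head literal. $\mathit{cl}(\Omega^Z)$ (the deductive closure) is the unique minimal set of literals satisfying $\Omega^Z$. Translation: $[w\le S]=\langle c_1,\dots,c_m\rangle:\{I: w\le\sum_{i\in I}w_i\}$, $[w<S]=\langle c_1,\dots,c_m\rangle:\{I: w<\sum_{i\in I}w_i\}$, $[S\le U]=\mathit{not}\,[U<S]$, $[L\le S\le U]=[L\le S],[S\le U]$. *)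

From Stdlib Require Import Reals List ClassicalEpsilon.
Import ListNotations.
Open Scope R_scope.
Set Implicit Arguments.

Definition decP (P : Prop) : bool :=
  if excluded_middle_informative P then true else false.

Inductive lit (A : Type) : Type := Pos (a : A) | Neg (a : A).
Arguments Pos {A} a.
Arguments Neg {A} a.

Definition lset (A : Type) := lit A -> Prop.
Definition lsubset {A} (X Y : lset A) := forall l, X l -> Y l.
Definition consistent {A} (Z : lset A) := forall a, ~ (Z (Pos a) /\ Z (Neg a)).

Inductive formula (A : Type) : Type :=
| FLit (l : lit A) | FBot | FTop
| FNot (F : formula A) | FAnd (F G : formula A) | FOr (F G : formula A).
Arguments FBot {A}.
Arguments FTop {A}.

Fixpoint sat {A} (Z : lset A) (F : formula A) : Prop :=
  match F with
  | FLit l => Z l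
  | FBot => False
  | FTop => True
  | FNot G => ~ sat Z G
  | FAnd G H => sat Z G /\ sat Z H
  | FOr G H => sat Z G \/ sat Z H
  end.

Fixpoint freduct {A} (Z : lset A) (F : formula A) : formula A :=
  match F with
  | FNot G => if decP (sat Z G) then FBot else FTop
  | FAnd G H => FAnd (freduct Z G) (freduct Z H)
  | FOr G H => FOr (freduct Z G) (freduct Z H)
  | _ => F
  end.

Fixpoint bigconj {A} (l : list (formula A)) : formula A :=
  match l with [] => FTop | [F] => F | F :: r => FAnd F (bigconj r) end.
Fixpoint bigdisj {A} (l : list (formula A)) : formula A :=
  match l with [] => FBot | [F] => F | F :: r => FOr F (bigdisj r) end.

Record prule (A : Type) := mkPrule { phead : formula A; pbody : formula A }.
Definition program (A : Type) := prule A -> Prop.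

Definition sat_prog {A} (Z : lset A) (P : program A) :=
  forall r, P r -> sat Z (pbody r) -> sat Z (phead r).

Definition preduct {A} (Z : lset A) (P : program A) : program A :=
  fun r' => exists r, P r /\
    r' = mkPrule (freduct Z (phead r)) (freduct Z (pbody r)).

Definition answer_set_notfree {A} (P : program A) (Y : lset A) :=
  consistent Y /\ sat_prog Y P /\
  forall Y', consistent Y' -> sat_prog Y' P -> lsubset Y' Y -> lsubset Y Y'.

Inductive relem (A : Type) : Type := EPos (l : lit A) | ENeg (l : lit A).
Arguments EPos {A} l.
Arguments ENeg {A} l.

(* L <= {c1=w1,...,cm=wm} <= U ; None for lower = -oo, None for upper = +oo *)
Record wconstr (A : Type) :=
  mkW { lo : option R; elems : list (relem A * R); hi : option R }.
Record wrule (A : Type) := mkWR { whead : wconstr A; wbody : list (wconstr A) }.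
Definition wprogram (A : Type) := wrule A -> Prop.

Definition esat {A} (Z : lset A) (e : relem A) : Prop :=
  match e with EPos l => Z l | ENeg l => ~ Z l end.

Definition lo_ok (L : option R) (x : R) : Prop :=
  match L with None => True | Some L => L <= x end.
Definition hi_ok (U : option R) (x : R) : Prop :=
  match U with None => True | Some U => x <= U end.

Definition wsum {A} (Z : lset A) (s : list (relem A * R)) : R :=
  fold_right (fun p acc => (if decP (esat Z (fst p)) then snd p else 0) + acc) 0 s.

Definition wsat {A} (Z : lset A) (C : wconstr A) : Prop :=
  lo_ok (lo C) (wsum Z (elems C)) /\ hi_ok (hi C) (wsum Z (elems C)).

Definition is_positive_head {A} (l : lit A) (r : wrule A) : Prop :=
  In (EPos l) (map fst (elems (whead r))).

(* rules  l <- (L1 <= S1'), ..., (Ln <= Sn')  with S' containing only literals *)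
Record rrule (A : Type) :=
  mkRR { rhead : lit A; rbody : list (option R * list (lit A * R)) }.

Definition neg_sum {A} (Z : lset A) (s : list (relem A * R)) : R :=
  fold_right (fun p acc =>
    (match fst p with
     | ENeg l => if decP (~ Z l) then snd p else 0
     | EPos _ => 0 end) + acc) 0 s.

Fixpoint pos_part {A} (s : list (relem A * R)) : list (lit A * R) :=
  match s with
  | [] => []
  | (EPos l, w) :: r => (l, w) :: pos_part r
  | (ENeg _, _) :: r => pos_part r
  end.

Definition lreduct {A} (Z : lset A) (C : wconstr A) : option R * list (lit A * R) :=
  (option_map (fun L => L - neg_sum Z (elems C)) (lo C), pos_part (elems C)).

Definition wreduct {A} (O : wprogram A) (Z : lset A) : rrule A -> Prop :=
  fun rr => exists r, O r /\
    (forall C, In C (wbody r) -> hi_ok (hi C) (wsum Z (elems C))) /\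
    is_positive_head (rhead rr) r /\ Z (rhead rr) /\
    rbody rr = map (lreduct Z) (wbody r).

Definition pos_sum {A} (Y : lset A) (s : list (lit A * R)) : R :=
  fold_right (fun p acc => (if decP (Y (fst p)) then snd p else 0) + acc) 0 s.

Definition rsat {A} (Y : lset A) (RP : rrule A -> Prop) : Prop :=
  forall rr, RP rr ->
    (forall b, In b (rbody rr) -> lo_ok (fst b) (pos_sum Y (snd b))) ->
    Y (rhead rr).

(* deductive closure: the least set of literals satisfying RP (intersection of all
   sets satisfying RP; for nonnegative weights this is the unique minimal one) *)
Definition cl {A} (RP : rrule A -> Prop) : lset A :=
  fun l => forall Y, rsat Y RP -> Y l.

Fixpoint masks (n : nat) : list (list bool) :=
  match n with
  | O => [[]]
  | S n => map (cons true) (masks n) ++ map (cons false) (masks n)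
  end.

Fixpoint select {T} (m : list bool) (s : list T) : list T :=
  match m, s with
  | true :: m', x :: s' => x :: select m' s'
  | false :: m', _ :: s' => select m' s'
  | _, _ => []
  end.

Definition elem_formula {A} (e : relem A) : formula A :=
  match e with EPos l => FLit l | ENeg l => FNot (FLit l) end.

Definition sumw {A} (s : list (relem A * R)) : R :=
  fold_right (fun p acc => snd p + acc) 0 s.

(* <c1,...,cm> : { I | P (sum_{i in I} w_i) } *)
Definition tr_sub {A} (P : R -> Prop) (s : list (relem A * R)) : formula A :=
  bigdisj (map (fun I => bigconj (map elem_formula (map fst (select I s))))
               (filter (fun I => decP (P (sumw (select I s)))) (masks (length s)))).

Definition tr_lo {A} (C : wconstr A) : formula A := tr_sub (lo_ok (lo C)) (elems C).
Definition tr_lt_hi {A} (C : wconstr A) : formula A :=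
  tr_sub (fun x => match hi C with None => False | Some U => U < x end) (elems C).
Definition tr {A} (C : wconstr A) : formula A := FAnd (tr_lo C) (FNot (tr_lt_hi C)).

Definition Pi1 {A} (O : wprogram A) : program A :=
  fun r => exists rho l, O rho /\ is_positive_head l rho /\
    r = mkPrule (FLit l) (bigconj (FNot (FNot (FLit l)) :: map tr (wbody rho))).

Definition nonneg_weights {A} (O : wprogram A) : Prop :=
  forall rho, O rho -> forall C, In C (whead rho :: wbody rho) ->
    forall p, In p (elems C) -> 0 <= snd p.

(* With nonnegative weights the translation [L <= S] is a monotone disjunction over
   subsets of S, so in the reduct it holds in Y exactly when the positive elements true
   in Y together with the negative elements true in Z reach L; that is, exactly when Y
   satisfies (L <= S)^Z.  The reduct of [S <= U] is the constant Z |= S <= U, and that of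
   not not l is Z |= l.  Hence the models of Pi_1^Z are exactly the sets closed under
   Omega^Z, whose least element is cl(Omega^Z); and a not-free program with a least model
   has that model as its only answer set if it is consistent, and none otherwise. *)

From Stdlib Require Import Reals List Lra Classical ClassicalEpsilon.
Open Scope R_scope.

Lemma decP_t (P : Prop) : P -> decP P = true.
Proof. unfold decP; destruct (excluded_middle_informative P); tauto. Qed.

Lemma decP_f (P : Prop) : ~ P -> decP P = false.
Proof. unfold decP; destruct (excluded_middle_informative P); tauto. Qed.

Lemma decP_true (P : Prop) : decP P = true <-> P.
Proof. unfold decP; destruct (excluded_middle_informative P); split; congruence || tauto. Qed.

Lemma decP_iff (P Q : Prop) : (P <-> Q) -> decP P = decP Q.
Proof.
  intro H; destruct (classic P).
  - rewrite !decP_t; tauto.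
  - rewrite !decP_f; tauto.
Qed.

Lemma sat_ext {A} (X Y : lset A) (F : formula A) :
  (forall l, X l <-> Y l) -> (sat X F <-> sat Y F).
Proof. intro E; induction F; simpl; firstorder. Qed.

Lemma sat_prog_ext {A} (X Y : lset A) (P : program A) :
  (forall l, X l <-> Y l) -> sat_prog X P -> sat_prog Y P.
Proof.
  intros E HX r Hr Hb.
  apply (sat_ext _ _ _ E), HX, (sat_ext _ _ _ E); assumption.
Qed.

Section LeastModel.
Variables (A : Type) (P : program A) (M : lset A).
Hypothesis M_model : sat_prog M P.
Hypothesis M_least : forall Y, sat_prog Y P -> lsubset M Y.

Lemma answer_set_least_model (Y : lset A) : consistent M ->
  (answer_set_notfree P Y <-> forall l, Y l <-> M l).
Proof.
  intros HM; split.
  - intros [_ [HY Hmin]] l.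
    split; [apply (Hmin M HM M_model (M_least Y HY)) | apply (M_least Y HY)].
  - intros E; split; [|split].
    + intros a [Ha Hna]; apply (HM a); split; apply E; assumption.
    + apply (sat_prog_ext M); [firstorder | assumption].
    + intros Y' _ HY' _ l Hl; apply (M_least Y' HY'), E, Hl.
Qed.

Lemma no_answer_set_least_model (Y : lset A) :
  ~ consistent M -> ~ answer_set_notfree P Y.
Proof.
  intros HM [HY [Hs _]]; apply HM; intros a [Ha Hna].
  apply (HY a); split; apply (M_least Y Hs); assumption.
Qed.

End LeastModel.

Lemma sat_bigconj {A} (Y : lset A) (L : list (formula A)) :
  sat Y (bigconj L) <-> forall F, In F L -> sat Y F.
Proof.
  induction L as [|F [|G L] IH]; simpl in *.
  - tauto.
  - firstorder congruence.
  - rewrite IH; firstorder congruence.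
Qed.

Lemma sat_bigdisj {A} (Y : lset A) (L : list (formula A)) :
  sat Y (bigdisj L) <-> exists F, In F L /\ sat Y F.
Proof.
  induction L as [|F [|G L] IH]; simpl in *.
  - firstorder.
  - firstorder congruence.
  - rewrite IH; firstorder congruence.
Qed.

Lemma freduct_bigconj {A} (Z : lset A) (L : list (formula A)) :
  freduct Z (bigconj L) = bigconj (map (freduct Z) L).
Proof. induction L as [|F [|G L] IH]; simpl in *; congruence. Qed.

Lemma freduct_bigdisj {A} (Z : lset A) (L : list (formula A)) :
  freduct Z (bigdisj L) = bigdisj (map (freduct Z) L).
Proof. induction L as [|F [|G L] IH]; simpl in *; congruence. Qed.

Lemma sat_freduct_not {A} (Y Z : lset A) (G : formula A) :
  sat Y (freduct Z (FNot G)) <-> ~ sat Z G.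
Proof. simpl; unfold decP; destruct (excluded_middle_informative (sat Z G)); simpl; tauto. Qed.

Lemma sat_freduct_self {A} (Z : lset A) (F : formula A) :
  sat Z (freduct Z F) <-> sat Z F.
Proof. induction F; try (simpl; tauto); apply sat_freduct_not. Qed.

Definition sum_weights {A} (q : relem A -> Prop) (s : list (relem A * R)) : R :=
  fold_right (fun p acc => (if decP (q (fst p)) then snd p else 0) + acc) 0 s.

Definition nonneg {B} (s : list (B * R)) : Prop := forall p, In p s -> 0 <= snd p.

Lemma nonneg_tail {B} (p : B * R) (s : list (B * R)) : nonneg (p :: s) -> nonneg s.
Proof. intros N x Hx; apply N; right; exact Hx. Qed.

Lemma nonneg_pos_part {A} (s : list (relem A * R)) : nonneg s -> nonneg (pos_part s).
Proof.
  induction s as [|[[l|l] w] s IH]; simpl; intros N p Hp; [destruct Hp | |].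
  - destruct Hp as [<-|Hp]; [apply (N (EPos l, w)); left; reflexivity|].
    exact (IH (nonneg_tail _ _ N) p Hp).
  - exact (IH (nonneg_tail _ _ N) p Hp).
Qed.

Lemma sum_weights_ext {A} (q1 q2 : relem A -> Prop) (s : list (relem A * R)) :
  (forall e, q1 e <-> q2 e) -> sum_weights q1 s = sum_weights q2 s.
Proof. intro H; induction s; simpl; [reflexivity|]; rewrite IHs, (decP_iff _ _ (H _)); reflexivity. Qed.

Lemma sum_weights_ge0 {A} (q : relem A -> Prop) (s : list (relem A * R)) :
  nonneg s -> 0 <= sum_weights q s.
Proof.
  induction s as [|p s IH]; simpl; intros N; [lra|].
  assert (0 <= snd p) by (apply N; left; reflexivity).
  pose proof (IH (nonneg_tail _ _ N)); destruct (decP _); lra.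
Qed.

Lemma sumw_select_le {A} (q : relem A -> Prop) (s : list (relem A * R)) (I : list bool) :
  nonneg s -> (forall x, In x (select I s) -> q (fst x)) ->
  sumw (select I s) <= sum_weights q s.
Proof.
  revert I; induction s as [|p s IH]; intros I N H; [destruct I as [|[] I]; simpl; lra|].
  assert (0 <= snd p) by (apply N; left; reflexivity).
  pose proof (sum_weights_ge0 q s (nonneg_tail _ _ N)).
  destruct I as [|[] I]; simpl in *.
  - destruct (decP _); lra.
  - rewrite decP_t by (apply H; left; reflexivity).
    assert (sumw (select I s) <= sum_weights q s) by (apply IH; [exact (nonneg_tail _ _ N) | auto]).
    unfold sumw in *; simpl; lra.
  - assert (sumw (select I s) <= sum_weights q s) by (apply IH; [exact (nonneg_tail _ _ N) | auto]).
    destruct (decP _); lra.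
Qed.

Lemma select_sat_mask {A} (q : relem A -> Prop) (s : list (relem A * R)) :
  let I := map (fun p => decP (q (fst p))) s in
  sumw (select I s) = sum_weights q s /\ forall x, In x (select I s) -> q (fst x).
Proof.
  induction s as [|p s [Hsum Hq]]; simpl; [split; [reflexivity | intros x []]|].
  destruct (classic (q (fst p))) as [Hp|Hp].
  - rewrite (decP_t _ Hp); simpl; split; [unfold sumw in *; simpl; lra|].
    intros x [<-|Hx]; auto.
  - rewrite (decP_f _ Hp); simpl; split; [lra | exact Hq].
Qed.

Lemma In_masks (n : nat) (m : list bool) : length m = n -> In m (masks n).
Proof.
  revert m; induction n as [|n IH]; intros [|b m] Hm; simpl in *; try discriminate; auto.
  injection Hm as Hm; apply in_or_app.
  destruct b; [left|right]; apply in_map, IH, Hm.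
Qed.

Lemma sat_freduct_tr_sub {A} (Y Z : lset A) (P : R -> Prop) (s : list (relem A * R)) :
  (forall x y, P x -> x <= y -> P y) -> nonneg s ->
  sat Y (freduct Z (tr_sub P s)) <->
  P (sum_weights (fun e => sat Y (freduct Z (elem_formula e))) s).
Proof.
  intros Pmono N; unfold tr_sub; rewrite freduct_bigdisj, sat_bigdisj, map_map.
  set (q := fun e => sat Y (freduct Z (elem_formula e))).
  split.
  - intros [F [HF HS]]; apply in_map_iff in HF; destruct HF as [I [<- HI]].
    apply filter_In in HI as [_ HP]; apply (proj1 (decP_true _)) in HP.
    apply (Pmono _ _ HP), sumw_select_le; [exact N|].
    intros x Hx; rewrite freduct_bigconj, sat_bigconj in HS; apply HS.
    rewrite !map_map; apply in_map_iff; exists x; auto.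
  - intros HP; destruct (select_sat_mask q s) as [Hsum Hq].
    set (I := map (fun p => decP (q (fst p))) s) in *.
    exists (freduct Z (bigconj (map elem_formula (map fst (select I s))))); split.
    + apply in_map_iff; exists I; split; [reflexivity|].
      apply filter_In; split; [apply In_masks; unfold I; apply length_map|].
      apply decP_true; rewrite Hsum; exact HP.
    + rewrite freduct_bigconj, sat_bigconj, !map_map; intros F HF.
      apply in_map_iff in HF; destruct HF as [x [<- Hx]]; exact (Hq x Hx).
Qed.

(* Positive elements are judged by Y, negative ones by Z: this is where L^Z comes from. *)
Lemma sum_weights_freduct {A} (Y Z : lset A) (s : list (relem A * R)) :
  sum_weights (fun e => sat Y (freduct Z (elem_formula e))) s
  = pos_sum Y (pos_part s) + neg_sum Z s.
Proof.
  induction s as [|[[l|l] w] s IH]; simpl in *; [lra | |].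
  - rewrite IH; destruct (decP (Y l)); lra.
  - rewrite IH; change (sat Y (if decP (Z l) then FBot else FTop))
      with (sat Y (freduct Z (FNot (FLit l)))).
    rewrite (decP_iff _ _ (sat_freduct_not Y Z (FLit l))).
    simpl; lra.
Qed.

Lemma sat_tr_lt_hi {A} (Z : lset A) (C : wconstr A) : nonneg (elems C) ->
  sat Z (tr_lt_hi C) <-> match hi C with None => False | Some U => U < wsum Z (elems C) end.
Proof.
  intros N; rewrite <- sat_freduct_self; unfold tr_lt_hi.
  rewrite sat_freduct_tr_sub by (auto; intros x y; destruct (hi C); lra).
  rewrite (sum_weights_ext _ (esat Z)); [tauto|].
  intros [l|l]; rewrite sat_freduct_self; simpl; tauto.
Qed.

Lemma sat_freduct_tr_lo {A} (Y Z : lset A) (C : wconstr A) : nonneg (elems C) ->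
  sat Y (freduct Z (tr_lo C)) <-> lo_ok (fst (lreduct Z C)) (pos_sum Y (snd (lreduct Z C))).
Proof.
  intros N; unfold tr_lo.
  rewrite sat_freduct_tr_sub, sum_weights_freduct
    by (auto; intros x y; destruct (lo C); simpl; lra).
  unfold lreduct; destruct (lo C); simpl; lra.
Qed.

Lemma sat_freduct_tr {A} (Y Z : lset A) (C : wconstr A) : nonneg (elems C) ->
  sat Y (freduct Z (tr C)) <->
  lo_ok (fst (lreduct Z C)) (pos_sum Y (snd (lreduct Z C))) /\ hi_ok (hi C) (wsum Z (elems C)).
Proof.
  intros N; unfold tr.
  change (sat Y (freduct Z (tr_lo C)) /\ sat Y (freduct Z (FNot (tr_lt_hi C))) <->
          lo_ok (fst (lreduct Z C)) (pos_sum Y (snd (lreduct Z C))) /\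
          hi_ok (hi C) (wsum Z (elems C))).
  rewrite sat_freduct_tr_lo, sat_freduct_not, sat_tr_lt_hi by exact N.
  unfold hi_ok; destruct (hi C); [|tauto].
  split; intros [? ?]; split; auto; lra.
Qed.

Lemma sat_freduct_Pi1_body {A} (Y Z : lset A) (l : lit A) (body : list (wconstr A)) :
  (forall C, In C body -> nonneg (elems C)) ->
  sat Y (freduct Z (bigconj (FNot (FNot (FLit l)) :: map tr body))) <->
  Z l /\ forall C, In C body ->
    lo_ok (fst (lreduct Z C)) (pos_sum Y (snd (lreduct Z C))) /\
    hi_ok (hi C) (wsum Z (elems C)).
Proof.
  intros N; rewrite freduct_bigconj, sat_bigconj.
  assert (Hnn : sat Y (freduct Z (FNot (FNot (FLit l)))) <-> Z l)
    by (rewrite sat_freduct_not; simpl; tauto).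
  split.
  - intros H; split; [apply Hnn, H; left; reflexivity|].
    intros C HC; apply sat_freduct_tr; auto.
    apply H; right; rewrite map_map; apply in_map_iff; eauto.
  - intros [HZ HC] F [<-|HF]; [apply Hnn, HZ|].
    rewrite map_map in HF; apply in_map_iff in HF; destruct HF as [C [<- HCin]].
    apply sat_freduct_tr; auto.
Qed.

Lemma nonneg_wbody {A} (O : wprogram A) (rho : wrule A) (C : wconstr A) :
  nonneg_weights O -> O rho -> In C (wbody rho) -> nonneg (elems C).
Proof. intros NW HO HC p Hp; apply (NW rho HO C); simpl; auto. Qed.

Lemma sat_preduct_Pi1 {A} (O : wprogram A) (Z Y : lset A) : nonneg_weights O ->
  sat_prog Y (preduct Z (Pi1 O)) <-> rsat Y (wreduct O Z).
Proof.
  intros NW; split.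
  - intros H rr [rho [HO [Hhi [Hpos [HZ Hb]]]]] Hbody.
    set (r := mkPrule (FLit (rhead rr))
                (bigconj (FNot (FNot (FLit (rhead rr))) :: map tr (wbody rho)))).
    apply (H (mkPrule (freduct Z (phead r)) (freduct Z (pbody r)))).
    + exists r; split; [exists rho, (rhead rr); auto | reflexivity].
    + simpl; apply sat_freduct_Pi1_body; [intros; eapply nonneg_wbody; eauto|].
      split; [exact HZ|]; intros C HC; split; [|exact (Hhi C HC)].
      apply Hbody; rewrite Hb; apply in_map, HC.
  - intros H r' [r [[rho [l [HO [Hpos ->]]]] ->]] Hs; simpl in *.
    apply sat_freduct_Pi1_body in Hs; [|intros; eapply nonneg_wbody; eauto].
    destruct Hs as [HZ HC].
    apply (H (mkRR l (map (lreduct Z) (wbody rho)))).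
    + exists rho; simpl; repeat split; auto; intros C HCin; apply HC, HCin.
    + simpl; intros b Hb; apply in_map_iff in Hb; destruct Hb as [C [<- HCin]].
      apply HC, HCin.
Qed.

Lemma pos_sum_mono {A} (X Y : lset A) (s : list (lit A * R)) :
  nonneg s -> lsubset X Y -> pos_sum X s <= pos_sum Y s.
Proof.
  intros N Sub; induction s as [|p s IH]; simpl; [lra|].
  assert (0 <= snd p) by (apply N; left; reflexivity).
  specialize (IH (nonneg_tail _ _ N)).
  destruct (classic (X (fst p))) as [Hx|Hx].
  - rewrite (decP_t _ Hx), (decP_t _ (Sub _ Hx)); lra.
  - rewrite (decP_f _ Hx); destruct (decP (Y (fst p))); lra.
Qed.

(* Monotonicity of the reduct bodies (nonnegative weights) makes the intersection [cl]
   itself closed. *)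
Lemma rsat_cl_wreduct {A} (O : wprogram A) (Z : lset A) :
  nonneg_weights O -> rsat (cl (wreduct O Z)) (wreduct O Z).
Proof.
  intros NW rr Hrr Hb Y HY; apply HY; [exact Hrr|].
  destruct Hrr as [rho [HO [_ [_ [_ Hrb]]]]].
  intros b Hbin; specialize (Hb b Hbin); rewrite Hrb in Hbin.
  apply in_map_iff in Hbin; destruct Hbin as [C [<- HC]].
  assert (pos_sum (cl (wreduct O Z)) (snd (lreduct Z C)) <= pos_sum Y (snd (lreduct Z C))).
  { apply pos_sum_mono; [apply nonneg_pos_part; eapply nonneg_wbody; eauto|].
    intros l Hl; exact (Hl Y HY). }
  destruct (fst (lreduct Z C)); simpl in *; [lra | exact I].
Qed.

Theorem lemma7 (A : Type) (O : wprogram A) (Z : lset A) :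
  nonneg_weights O -> consistent Z ->
  (consistent (cl (wreduct O Z)) ->
     forall Y, answer_set_notfree (preduct Z (Pi1 O)) Y <->
               (forall l, Y l <-> cl (wreduct O Z) l)) /\
  (~ consistent (cl (wreduct O Z)) ->
     forall Y, ~ answer_set_notfree (preduct Z (Pi1 O)) Y).
Proof.
  intros NW _.
  assert (Hmodel : sat_prog (cl (wreduct O Z)) (preduct Z (Pi1 O)))
    by (apply sat_preduct_Pi1, rsat_cl_wreduct; exact NW).
  assert (Hleast : forall Y, sat_prog Y (preduct Z (Pi1 O)) -> lsubset (cl (wreduct O Z)) Y)
    by (intros Y HY l Hl; apply Hl, sat_preduct_Pi1; assumption).
  split; intros HM Y.
  - exact (answer_set_least_model _ _ _ Hmodel Hleast Y HM).
  - exact (no_answer_set_least_model _ _ _ Hleast Y HM).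
Qed.
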